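(* Let $p,q \geq 2$. Let $M_1, M_2 \subset \widetilde{\mathrm{Ein}}^{p,q}$ be two Minkowski patches with $M_1 \cap M_2 \neq \emptyset$. Then $\pi_{\mathbf{X}}(M_1 \cap M_2)$ is a connected component of $\pi_{\mathbf{X}}(M_1) \cap \pi_{\mathbf{X}}(M_2)$.
   Context: $\mathrm{Ein}^{p,q}$ is the set of isotropic lines of $\mathbb{R}^{p+1,q+1}$ with its induced conformal structure. $\widetilde{\mathrm{Ein}}^{p,q} \cong \mathbb{S}^p \times \mathbb{S}^q$ is the set of isotropic vectors of $\mathbb{R}^{p+1,q+1}$ of Euclidean norm $1$, and $\pi_{\mathbf{X}} : \widetilde{\mathrm{Ein}}^{p,q} \to \mathrm{Ein}^{p,q}$ the natural double (universal, since $\min(p,q)\ge2$) cover. For $x=[v]\in\mathrm{Ein}^{p,q}$, the Minkowski patch $M_x=\{[w]: B(v,w)\ne 0\}$; a Minkowski patch of $\widetilde{\mathrm{Ein}}^{p,q}$ is a connected component of $\pi_{\mathbf{X}}^{-1}(M_x)$ for some Minkowski patch $M_x$ of $\mathrm{Ein}^{p,q}$. *)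

From Stdlib Require Import Reals.
Open Scope R_scope.

(* Vectors of R^n are represented as functions nat -> R; only the
   coordinates 0..n-1 matter (points of Ein~ are required to vanish beyond). *)
Definition Vec := nat -> R.

Fixpoint rsum (f : nat -> R) (k : nat) : R :=
  match k with O => 0 | S k' => rsum f k' + f k' end.

Definition vneg (v : Vec) : Vec := fun i => - v i.

Definition Bform (p q : nat) (v w : Vec) : R :=
  rsum (fun i => if Nat.ltb i (S p) then v i * w i else - (v i * w i))
       (p + q + 2).

Definition enorm2 (p q : nat) (v : Vec) : R := rsum (fun i => v i * v i) (p + q + 2).
Definition edist (p q : nat) (v w : Vec) : R :=
  sqrt (rsum (fun i => (v i - w i) * (v i - w i)) (p + q + 2)).

Definition Etilde (p q : nat) (v : Vec) : Prop :=
  (forall i, (p + q + 2 <= i)%nat -> v i = 0) /\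
  Bform p q v v = 0 /\ enorm2 p q v = 1.

Definition openEt (p q : nat) (U : Vec -> Prop) : Prop :=
  forall w, Etilde p q w -> U w ->
    exists eps, 0 < eps /\
      forall w', Etilde p q w' -> edist p q w w' < eps -> U w'.

(* Subsets of Ein^{p,q} are represented by their preimages in Ein~ under
   pi_X (i.e. by (+-)-symmetric subsets of Ein~).  The topology of Ein is
   the quotient topology: U subset of Ein is open iff pi_X^{-1}(U) is open. *)
Definition symm (U : Vec -> Prop) : Prop := forall w, U w -> U (vneg w).
Definition openEin (p q : nat) (U : Vec -> Prop) : Prop := symm U /\ openEt p q U.

(* pi_X(A), given through its preimage pi_X^{-1}(pi_X(A)) in Ein~. *)
Definition piX (p q : nat) (A : Vec -> Prop) : Vec -> Prop :=
  fun w => Etilde p q w /\ (A w \/ A (vneg w)).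

Definition connected_in (X : Vec -> Prop) (Op : (Vec -> Prop) -> Prop)
  (A : Vec -> Prop) : Prop :=
  ~ exists U V, Op U /\ Op V /\
      (forall w, X w -> A w -> U w \/ V w) /\
      (forall w, X w -> A w -> U w -> V w -> False) /\
      (exists w, X w /\ A w /\ U w) /\ (exists w, X w /\ A w /\ V w).

Definition subset_in (X : Vec -> Prop) (A B : Vec -> Prop) : Prop :=
  forall w, X w -> A w -> B w.

Definition component_in (X : Vec -> Prop) (Op : (Vec -> Prop) -> Prop)
  (C Y : Vec -> Prop) : Prop :=
  subset_in X C Y /\ (exists w, X w /\ C w) /\ connected_in X Op C /\
  forall D, connected_in X Op D -> subset_in X C D -> subset_in X D Y ->
    subset_in X D C.

(* Minkowski patch of Ein~: a connected component of pi_X^{-1}(M_x),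
   where M_x = {[w] : B(v,w) <> 0} for x = [v] in Ein.  Here v ranges over
   Ein~ (every point of Ein has such a representative; the condition is
   scale invariant). *)
Definition MinkPatchT (p q : nat) (M : Vec -> Prop) : Prop :=
  (forall w, M w -> Etilde p q w) /\
  exists v, Etilde p q v /\
    component_in (Etilde p q) (openEt p q) M
      (fun w => Etilde p q w /\ Bform p q v w <> 0).

(* A Minkowski patch of Ein~ is a half {B(v,.) > 0} for an isotropic unit vector v, so
   M1 /\ M2 = {B(v1,.) > 0, B(v2,.) > 0}, and pi_X(M1 /\ M2) = {B(v1,.) B(v2,.) > 0}.
   Together with {B(v1,.) B(v2,.) < 0} this is a splitting of pi_X(M1) /\ pi_X(M2) into
   symmetric open sets, so everything reduces to the connectedness of M1 /\ M2.
   In the Minkowski chart of M1, a copy of R^{p,q}, the function B(v2,.) is either affine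
   (and M1 /\ M2 is a half-space) or a nonzero multiple of the quadratic form Q centred at
   a point; for p, q >= 2 each region {+-Q > 0} is connected: a segment pushes any point
   onto the definite side of the sign in question, and two points there are joined
   avoiding the origin through a third vector orthogonal to both. *)

From Stdlib Require Import Reals Lra Lia FunctionalExtensionality Classical.
Open Scope R_scope.

Lemma rsum_ext f g n : (forall i, (i < n)%nat -> f i = g i) -> rsum f n = rsum g n.
Proof. induction n; intros H; simpl; auto. rewrite IHn, H; auto; intros; apply H; lia. Qed.

Lemma rsum_lin a b f g n :
  rsum (fun i => a * f i + b * g i) n = a * rsum f n + b * rsum g n.
Proof. induction n; simpl; [ring|]. rewrite IHn; ring. Qed.

Lemma rsum_add f g n : rsum (fun i => f i + g i) n = rsum f n + rsum g n.
Proof. induction n; simpl; [ring|]. rewrite IHn; ring. Qed.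

Lemma rsum_scal a f n : rsum (fun i => a * f i) n = a * rsum f n.
Proof. induction n; simpl; [ring|]. rewrite IHn; ring. Qed.

Lemma rsum_le f g n : (forall i, (i < n)%nat -> f i <= g i) -> rsum f n <= rsum g n.
Proof.
  induction n; intros H; simpl; [lra|].
  assert (rsum f n <= rsum g n) by (apply IHn; intros; apply H; lia).
  specialize (H n ltac:(lia)); lra.
Qed.

Lemma rsum_eq0 f n : (forall i, (i < n)%nat -> f i = 0) -> rsum f n = 0.
Proof. induction n; intros H; simpl; [auto|]. rewrite IHn, H by (auto || (intros; apply H; lia)); ring. Qed.

Lemma rsum_ge0 f n : (forall i, (i < n)%nat -> 0 <= f i) -> 0 <= rsum f n.
Proof. intros H; rewrite <- (rsum_eq0 (fun _ => 0) n) by auto; apply rsum_le; auto. Qed.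

Lemma rsum_term_le f n j :
  (forall i, (i < n)%nat -> 0 <= f i) -> (j < n)%nat -> f j <= rsum f n.
Proof.
  induction n; intros H Hj; simpl; [lia|].
  assert (0 <= rsum f n) by (apply rsum_ge0; intros; apply H; lia).
  destruct (Nat.eq_dec j n) as [->|]; [lra|].
  assert (f j <= rsum f n) by (apply IHn; [intros; apply H|]; lia).
  specialize (H n ltac:(lia)); lra.
Qed.

Lemma Rabs_rsum_le f n : Rabs (rsum f n) <= rsum (fun i => Rabs (f i)) n.
Proof.
  induction n; simpl; [rewrite Rabs_R0; lra|].
  eapply Rle_trans; [apply Rabs_triang|lra].
Qed.

Lemma rsum_mono_n f m n :
  (forall i, (i < n)%nat -> 0 <= f i) -> (m <= n)%nat -> rsum f m <= rsum f n.
Proof.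
  intros Hf Hmn; induction Hmn as [|n Hmn IH]; simpl; [lra|].
  assert (0 <= f n) by (apply Hf; lia).
  assert (rsum f m <= rsum f n) by (apply IH; intros; apply Hf; lia); lra.
Qed.

Lemma rsum_three_le f n a :
  (forall i, (i < n)%nat -> 0 <= f i) -> (a + 2 < n)%nat ->
  f a + f (S a) + f (S (S a)) <= rsum f n.
Proof.
  intros Hf Ha.
  assert (H3 : rsum f (S (S (S a))) <= rsum f n) by (apply rsum_mono_n; auto; lia).
  assert (0 <= rsum f a) by (apply rsum_ge0; intros; apply Hf; lia).
  simpl in H3; lra.
Qed.

Definition vadd (x y : Vec) : Vec := fun i => x i + y i.
Definition vscal (a : R) (x : Vec) : Vec := fun i => a * x i.
Definition lerp (x y : Vec) (t : R) : Vec := vadd (vscal (1 - t) x) (vscal t y).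

Lemma lerp0 x y : lerp x y 0 = x.
Proof. extensionality i; unfold lerp, vadd, vscal; ring. Qed.
Lemma lerp1 x y : lerp x y 1 = y.
Proof. extensionality i; unfold lerp, vadd, vscal; ring. Qed.
Lemma lerp_sym x y t : lerp x y t = lerp y x (1 - t).
Proof. extensionality i; unfold lerp, vadd, vscal; ring. Qed.

Lemma convex_pos a b t : 0 < a -> 0 < b -> 0 <= t <= 1 -> 0 < (1 - t) * a + t * b.
Proof. intros; destruct (Rle_lt_dec t (1/2)); nra. Qed.

Section Form.

Variables p q : nat.
Hypothesis hp : (2 <= p)%nat.
Hypothesis hq : (2 <= q)%nat.

Local Notation dim := (p + q + 2)%nat.
Local Notation B := (Bform p q).
Local Notation Et := (Etilde p q).

Definition supported (x : Vec) : Prop := forall i, (dim <= i)%nat -> x i = 0.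

Definition sgn (i : nat) : R := if Nat.ltb i (S p) then 1 else -1.

Lemma sgn_sqr i : sgn i * sgn i = 1.
Proof. unfold sgn; destruct (Nat.ltb i (S p)); ring. Qed.

Lemma Bform_sgn x y : B x y = rsum (fun i => sgn i * (x i * y i)) dim.
Proof. apply rsum_ext; intros; unfold sgn; destruct (Nat.ltb i (S p)); ring. Qed.

Lemma Bform_sym x y : B x y = B y x.
Proof. rewrite !Bform_sgn; apply rsum_ext; intros; ring. Qed.

Lemma Bform_addr x y z : B x (vadd y z) = B x y + B x z.
Proof.
  rewrite !Bform_sgn, <- rsum_add; apply rsum_ext; intros; unfold vadd; ring.
Qed.

Lemma Bform_scalr x a y : B x (vscal a y) = a * B x y.
Proof. rewrite !Bform_sgn, <- rsum_scal; apply rsum_ext; intros; unfold vscal; ring. Qed.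

Lemma Bform_addl x y z : B (vadd y z) x = B y x + B z x.
Proof. rewrite !(Bform_sym _ x); apply Bform_addr. Qed.

Lemma Bform_scall x a y : B (vscal a y) x = a * B y x.
Proof. rewrite !(Bform_sym _ x); apply Bform_scalr. Qed.

Lemma Bform_oppl x y : B (vneg x) y = - B x y.
Proof.
  replace (vneg x) with (vscal (-1) x) by (extensionality i; unfold vneg, vscal; ring).
  rewrite Bform_scall; ring.
Qed.

Lemma Bform_oppr x y : B x (vneg y) = - B x y.
Proof. rewrite Bform_sym, Bform_oppl, Bform_sym; auto. Qed.

Ltac Bexpand :=
  repeat first [rewrite Bform_addr | rewrite Bform_addl | rewrite Bform_scalr | rewrite Bform_scall].

Definition ip (x y : Vec) : R := rsum (fun i => x i * y i) dim.

Lemma ip_sym x y : ip x y = ip y x.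
Proof. apply rsum_ext; intros; ring. Qed.
Lemma ip_addr x y z : ip x (vadd y z) = ip x y + ip x z.
Proof. unfold ip; rewrite <- rsum_add; apply rsum_ext; intros; unfold vadd; ring. Qed.
Lemma ip_scalr x a y : ip x (vscal a y) = a * ip x y.
Proof. unfold ip; rewrite <- rsum_scal; apply rsum_ext; intros; unfold vscal; ring. Qed.
Lemma ip_addl x y z : ip (vadd y z) x = ip y x + ip z x.
Proof. rewrite !(ip_sym _ x); apply ip_addr. Qed.
Lemma ip_scall x a y : ip (vscal a y) x = a * ip y x.
Proof. rewrite !(ip_sym _ x); apply ip_scalr. Qed.

Ltac Iexpand :=
  repeat first [rewrite ip_addr | rewrite ip_addl | rewrite ip_scalr | rewrite ip_scall].

Lemma ip_self_ge0 x : 0 <= ip x x.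
Proof. apply rsum_ge0; intros; apply Rle_0_sqr. Qed.

Lemma sqr_coord_le_ip x i : (i < dim)%nat -> x i * x i <= ip x x.
Proof. intros; apply (rsum_term_le (fun i => x i * x i)); auto; intros; apply Rle_0_sqr. Qed.

Lemma ip_self_le0 x : ip x x <= 0 -> forall i, (i < dim)%nat -> x i = 0.
Proof. intros H i Hi; pose proof (sqr_coord_le_ip x i Hi); nra. Qed.

Lemma Rabs_coord_le_edist x y i : (i < dim)%nat -> Rabs (x i - y i) <= edist p q x y.
Proof.
  intros Hi; unfold edist; rewrite <- sqrt_Rsqr_abs; apply sqrt_le_1_alt; unfold Rsqr.
  apply (rsum_term_le (fun i => (x i - y i) * (x i - y i))); auto; intros; apply Rle_0_sqr.
Qed.

Definition cartan (v : Vec) : Vec := fun i => sgn i * v i.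

Lemma Bform_cartan v w : B (cartan v) w = ip v w.
Proof.
  rewrite Bform_sgn; apply rsum_ext; intros i _; unfold cartan.
  replace (sgn i * (sgn i * v i * w i)) with (sgn i * sgn i * (v i * w i)) by ring.
  rewrite sgn_sqr; ring.
Qed.

Lemma ip_cartan v w : ip v (cartan w) = B v w.
Proof. rewrite Bform_sgn; apply rsum_ext; intros; unfold cartan; ring. Qed.

Lemma Etilde_Bform_cartan v : Et v -> B v (cartan v) = 1.
Proof. intros [_ [_ Hn]]; rewrite Bform_sym, Bform_cartan; exact Hn. Qed.

Lemma Etilde_Bform_cartan2 v : Et v -> B (cartan v) (cartan v) = 0.
Proof. intros [_ [Hv _]]; rewrite Bform_cartan, ip_cartan; exact Hv. Qed.

Lemma supported_cartan v : supported v -> supported (cartan v).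
Proof. intros H i Hi; unfold cartan; rewrite H by auto; ring. Qed.

Definition side (s : bool) (x : Vec) : Vec :=
  fun i => if Bool.eqb s (Nat.ltb i (S p)) then x i else 0.

Definition side_sign (s : bool) : R := if s then 1 else -1.

Lemma side_split s x : vadd (side s x) (side (negb s) x) = x.
Proof. extensionality i; unfold vadd, side; destruct s, (Nat.ltb i (S p)); simpl; ring. Qed.

Lemma side_idem s x : side s (side s x) = side s x.
Proof. extensionality i; unfold side; destruct (Bool.eqb s (Nat.ltb i (S p))); auto. Qed.

Lemma side_lerp s x y t : side s (lerp x y t) = lerp (side s x) (side s y) t.
Proof. extensionality i; unfold side, lerp, vadd, vscal; destruct (Bool.eqb s _); ring. Qed.

Lemma supported_side s x : supported x -> supported (side s x).
Proof. intros H i Hi; unfold side; rewrite H by auto; destruct (Bool.eqb s _); auto. Qed.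

Lemma ip_side_swap s x y : ip x (side s y) = ip (side s x) y.
Proof. apply rsum_ext; intros; unfold side; destruct (Bool.eqb s _); ring. Qed.

Lemma Bform_side_r s x y : B x (side s y) = side_sign s * ip (side s x) y.
Proof.
  rewrite Bform_sgn; unfold ip; rewrite <- rsum_scal; apply rsum_ext; intros.
  unfold side, sgn, side_sign; destruct s, (Nat.ltb i (S p)); simpl; ring.
Qed.

Lemma Bform_side_cross s x y : B (side s x) (side (negb s) y) = 0.
Proof. rewrite Bform_sgn; apply rsum_eq0; intros; unfold side; destruct s, (Nat.ltb i (S p)); simpl; ring. Qed.

Lemma Bform_side s x : side s x = x -> B x x = side_sign s * ip x x.
Proof. intros H; rewrite <- H at 2 3; rewrite Bform_side_r, H; auto. Qed.

Lemma ip_side_l s v x : ip (side s v) x = (ip v x + side_sign s * B v x) / 2.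
Proof.
  rewrite Bform_sgn; unfold ip.
  rewrite <- (Rmult_1_l (rsum (fun i => v i * x i) dim)), <- rsum_lin.
  unfold Rdiv; rewrite Rmult_comm, <- rsum_scal; apply rsum_ext; intros.
  unfold side, sgn, side_sign; destruct s, (Nat.ltb i (S p)); simpl; field.
Qed.

Definition normalize (w : Vec) : Vec := vscal (/ sqrt (ip w w)) w.

Lemma ip_self_pos_of_Bform v w : B v w <> 0 -> 0 < ip w w.
Proof.
  intros H; destruct (Rle_lt_dec (ip w w) 0) as [Hle|]; auto; exfalso; apply H.
  rewrite Bform_sgn; apply rsum_eq0; intros i Hi; rewrite (ip_self_le0 w Hle i Hi); ring.
Qed.

Lemma Etilde_normalize w : supported w -> B w w = 0 -> 0 < ip w w -> Et (normalize w).
Proof.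
  intros Hs Hw Hpos; pose proof (sqrt_lt_R0 _ Hpos).
  split; [|split]; unfold normalize.
  - intros i Hi; unfold vscal; rewrite Hs by auto; ring.
  - Bexpand; rewrite Hw; ring.
  - change (ip (vscal (/ sqrt (ip w w)) w) (vscal (/ sqrt (ip w w)) w) = 1).
    Iexpand; rewrite <- (sqrt_sqrt (ip w w)) at 3 by lra; field; lra.
Qed.

Lemma Bform_normalize_pos u w : 0 < ip w w -> 0 < B u w -> 0 < B u (normalize w).
Proof.
  intros Hw Hu; unfold normalize; rewrite Bform_scalr.
  apply Rmult_lt_0_compat; auto; apply Rinv_0_lt_compat, sqrt_lt_R0; auto.
Qed.

Lemma normalize_scal a w : ip w w = 1 -> 0 < a -> normalize (vscal a w) = w.
Proof.
  intros Hw Ha; unfold normalize; rewrite ip_scalr, ip_scall, Hw, Rmult_1_r, sqrt_square by lra.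
  extensionality i; unfold vscal; field; lra.
Qed.

Definition chart_dom (v x : Vec) : Prop := supported x /\ B v x = 0 /\ B (cartan v) x = 0.

(* The Minkowski chart of the patch {B(v,.) > 0}: the model space {v, cartan v}^perp,
   of signature (p,q), is mapped onto the isotropic vectors w with B(v,w) = 1. *)
Definition chart (v x : Vec) : Vec := vadd (vadd x (cartan v)) (vscal (- B x x / 2) v).
Definition chart_pt (v x : Vec) : Vec := normalize (chart v x).
Definition chart_inv (v z : Vec) : Vec :=
  vadd (vscal (/ B v z) z) (vadd (vscal (- B (cartan v) z / B v z) v) (vscal (-1) (cartan v))).

Definition vsub (x y : Vec) : Vec := vadd x (vscal (-1) y).

Lemma chart_dom_add v x y : chart_dom v x -> chart_dom v y -> chart_dom v (vadd x y).
Proof.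
  intros [Hx [Hx1 Hx2]] [Hy [Hy1 Hy2]]; split; [|split]; [|Bexpand; lra..].
  intros i Hi; unfold vadd; rewrite Hx, Hy by auto; ring.
Qed.

Lemma chart_dom_scal v a x : chart_dom v x -> chart_dom v (vscal a x).
Proof.
  intros [Hx [Hx1 Hx2]]; split; [|split]; [|Bexpand; nra..].
  intros i Hi; unfold vscal; rewrite Hx by auto; ring.
Qed.

Lemma chart_dom_lerp v x y t : chart_dom v x -> chart_dom v y -> chart_dom v (lerp x y t).
Proof. intros; apply chart_dom_add; apply chart_dom_scal; auto. Qed.

Lemma chart_dom_sub v x y : chart_dom v x -> chart_dom v y -> chart_dom v (vsub x y).
Proof. intros; apply chart_dom_add; [|apply chart_dom_scal]; auto. Qed.

Lemma chart_dom_side v s x : chart_dom v x -> chart_dom v (side s x).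
Proof.
  intros [Hx [Hx1 Hx2]].
  assert (H0 : ip (side s v) x = 0) by (rewrite ip_side_l, <- Bform_cartan, Hx1, Hx2; field).
  split; [apply supported_side; auto|split].
  - rewrite Bform_side_r, H0; ring.
  - rewrite Bform_cartan, ip_side_swap, H0; auto.
Qed.

Section Chart.

Variable v : Vec.
Hypothesis Hv : Et v.

Let Bvv : B v v = 0 := proj1 (proj2 Hv).
Let BvJ : B v (cartan v) = 1 := Etilde_Bform_cartan v Hv.
Let BJv : B (cartan v) v = 1 := eq_trans (Bform_sym _ _) BvJ.
Let BJJ : B (cartan v) (cartan v) = 0 := Etilde_Bform_cartan2 v Hv.

Lemma Bform_chart_l x : chart_dom v x -> B v (chart v x) = 1.
Proof. intros [_ [H1 _]]; unfold chart; Bexpand; rewrite H1, BvJ, Bvv; ring. Qed.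

Lemma Bform_chart_r u x : B u (chart v x) = B u x + B u (cartan v) - B x x / 2 * B u v.
Proof. unfold chart; Bexpand; field. Qed.

(* This is where the quadratic form of the model space comes from. *)
Lemma Bform_chart_chart x0 x : chart_dom v x0 -> chart_dom v x ->
  B (chart v x0) (chart v x) = - B (vsub x x0) (vsub x x0) / 2.
Proof.
  intros [_ [H1 H2]] [_ [G1 G2]]; unfold chart, vsub; Bexpand.
  rewrite ?(Bform_sym x v), ?(Bform_sym x (cartan v)), ?(Bform_sym x0 v),
    ?(Bform_sym x0 (cartan v)), ?(Bform_sym x0 x), ?H1, ?H2, ?G1, ?G2, ?BvJ, ?BJv, ?Bvv, ?BJJ.
  field.
Qed.

Lemma chart_isotropic x : chart_dom v x -> B (chart v x) (chart v x) = 0.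
Proof.
  intros Hx; rewrite Bform_chart_chart by auto.
  unfold vsub; Bexpand; field.
Qed.

Lemma supported_chart x : chart_dom v x -> supported (chart v x).
Proof.
  intros [Hx _] i Hi; unfold chart, vadd, vscal.
  rewrite Hx, (supported_cartan v (proj1 Hv)), (proj1 Hv) by auto; ring.
Qed.

Lemma ip_chart_pos x : chart_dom v x -> 0 < ip (chart v x) (chart v x).
Proof. intros; apply (ip_self_pos_of_Bform v); rewrite Bform_chart_l; auto; lra. Qed.

Lemma Etilde_chart_pt x : chart_dom v x -> Et (chart_pt v x).
Proof.
  intros; apply Etilde_normalize; auto using supported_chart, chart_isotropic, ip_chart_pos.
Qed.

Lemma chart_inv_spec z : supported z -> B z z = 0 -> B v z <> 0 ->
  chart_dom v (chart_inv v z) /\ chart v (chart_inv v z) = vscal (/ B v z) z.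
Proof.
  intros Hz Hzz Hb.
  assert (Hdom : chart_dom v (chart_inv v z)).
  { split; [|split]; unfold chart_inv; [|Bexpand; rewrite ?BvJ, ?BJv, ?Bvv, ?BJJ; field; auto..].
    intros i Hi; unfold vadd, vscal.
    rewrite Hz, (supported_cartan v (proj1 Hv)), (proj1 Hv) by auto; ring. }
  split; auto.
  assert (HQ : B (chart_inv v z) (chart_inv v z) = - 2 * (B (cartan v) z / B v z)).
  { unfold chart_inv; Bexpand.
    rewrite (Bform_sym z v), (Bform_sym z (cartan v)), Hzz, BvJ, BJv, Bvv, BJJ; field; auto. }
  unfold chart; rewrite HQ; extensionality i; unfold chart_inv, vadd, vscal; field; auto.
Qed.

Lemma chart_pt_inv w : Et w -> 0 < B v w ->
  chart_dom v (chart_inv v w) /\ chart_pt v (chart_inv v w) = w /\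
  chart v (chart_inv v w) = vscal (/ B v w) w.
Proof.
  intros [Hw1 [Hw2 Hw3]] Hb.
  destruct (chart_inv_spec w Hw1 Hw2 ltac:(lra)) as [Hdom Hc].
  split; [exact Hdom | split; [|exact Hc]]; unfold chart_pt; rewrite Hc.
  apply normalize_scal; [exact Hw3 | apply Rinv_0_lt_compat; auto].
Qed.

End Chart.

Definition vcont (g : R -> Vec) : Prop := forall i, continuity (fun t => g t i).

Lemma continuity_rsum (F : R -> nat -> R) n :
  (forall i, continuity (fun t => F t i)) -> continuity (fun t => rsum (F t) n).
Proof.
  intros H; induction n; simpl; [apply continuity_const; intros ? ?; auto|].
  apply (continuity_plus (fun t => rsum (F t) n) (fun t => F t n)); auto.
Qed.

Lemma continuity_Bform a b : vcont a -> vcont b -> continuity (fun t => B (a t) (b t)).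
Proof.
  intros Ha Hb; unfold Bform; apply continuity_rsum; intros i.
  assert (Hab : continuity (fun t => a t i * b t i))
    by (apply (continuity_mult (fun t => a t i) (fun t => b t i)); auto).
  destruct (Nat.ltb i (S p)); auto; apply (continuity_opp (fun t => a t i * b t i)); auto.
Qed.

Lemma continuity_ip a b : vcont a -> vcont b -> continuity (fun t => ip (a t) (b t)).
Proof.
  intros Ha Hb; apply continuity_rsum; intros i.
  apply (continuity_mult (fun t => a t i) (fun t => b t i)); auto.
Qed.

Lemma vcont_normalize g : vcont g -> (forall t, 0 < ip (g t) (g t)) -> vcont (fun t => normalize (g t)).
Proof.
  intros Hg Hpos i t; unfold normalize, vscal.
  apply (continuity_pt_mult (fun t => / sqrt (ip (g t) (g t))) (fun t => g t i)); [|apply Hg].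
  apply (continuity_pt_inv (fun t => sqrt (ip (g t) (g t)))).
  - apply (continuity_pt_comp (fun t => ip (g t) (g t)) sqrt); [apply continuity_ip; auto|].
    apply continuity_pt_sqrt; left; auto.
  - pose proof (sqrt_lt_R0 _ (Hpos t)); lra.
Qed.

Lemma vcont_chart_lerp v x y : vcont (fun t => chart v (lerp x y t)).
Proof.
  assert (Hl : vcont (fun t => lerp x y t)) by (intros i; unfold lerp, vadd, vscal; reg).
  assert (HQ : continuity (fun t => - B (lerp x y t) (lerp x y t) / 2)).
  { apply (continuity_mult (fun t => - B (lerp x y t) (lerp x y t)) (fun _ => / 2)).
    - apply (continuity_opp (fun t => B (lerp x y t) (lerp x y t))), continuity_Bform; auto.
    - apply continuity_const; intros ? ?; auto. }
  intros i; unfold chart, vadd, vscal.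
  apply (continuity_plus (fun t => lerp x y t i + cartan v i) (fun t => - B (lerp x y t) (lerp x y t) / 2 * v i)).
  - apply (continuity_plus (fun t => lerp x y t i) (fun _ => cartan v i)); [apply Hl|].
    apply continuity_const; intros ? ?; auto.
  - apply (continuity_mult (fun t => - B (lerp x y t) (lerp x y t) / 2) (fun _ => v i)); auto.
    apply continuity_const; intros ? ?; auto.
Qed.

Lemma vcont_edist g t eps : vcont g -> 0 < eps ->
  exists d, 0 < d /\ forall s, Rabs (s - t) < d -> edist p q (g t) (g s) < eps.
Proof.
  intros Hg He.
  set (h := fun s => rsum (fun i => (g t i - g s i) * (g t i - g s i)) dim).
  assert (Hc : continuity h).
  { apply (continuity_rsum (fun s i => (g t i - g s i) * (g t i - g s i))); intros i.
    assert (Hi : continuity (fun s => g t i - g s i))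
      by (apply (continuity_minus (fun _ => g t i) (fun s => g s i)); auto;
          apply continuity_const; intros ? ?; auto).
    apply (continuity_mult (fun s => g t i - g s i) (fun s => g t i - g s i)); auto. }
  assert (h0 : h t = 0) by (apply rsum_eq0; intros; ring).
  destruct (Hc t (eps * eps) ltac:(nra)) as [d [Hd Hnear]].
  exists d; split; auto; intros s Hs.
  assert (Hhs : h s < eps * eps).
  { destruct (Req_dec s t) as [->|Hst]; [rewrite h0; nra|].
    specialize (Hnear s (conj (conj I (not_eq_sym Hst)) Hs)); simpl in Hnear.
    unfold R_dist in Hnear; rewrite h0, Rminus_0_r in Hnear; apply Rabs_def2 in Hnear; lra. }
  assert (0 <= h s) by (apply rsum_ge0; intros; apply Rle_0_sqr).
  unfold edist; fold (h s); rewrite <- (sqrt_square eps) by lra; apply sqrt_lt_1_alt; lra.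
Qed.

Lemma openEt_path_near (U : Vec -> Prop) g t : openEt p q U -> vcont g -> Et (g t) -> U (g t) ->
  exists d, 0 < d /\ forall s, Rabs (s - t) < d -> Et (g s) -> U (g s).
Proof.
  intros HU Hg Ht Ut; destruct (HU (g t) Ht Ut) as [eps [Heps Hball]].
  destruct (vcont_edist g t eps Hg Heps) as [d [Hd Hnear]].
  exists d; split; auto.
Qed.

(* A continuous path cannot jump between two open sets that are disjoint on it
   (connectedness of [0, 1], via the supremum of the initial segment inside U). *)
Lemma path_stays (U V : Vec -> Prop) g : openEt p q U -> openEt p q V -> vcont g ->
  (forall t, 0 <= t <= 1 -> Et (g t) /\ (U (g t) \/ V (g t)) /\ ~ (U (g t) /\ V (g t))) ->
  U (g 0) -> U (g 1).
Proof.
  intros HU HV Hg Hpath U0.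
  set (E := fun t => 0 <= t <= 1 /\ forall s, 0 <= s <= t -> U (g s)).
  assert (E0 : E 0) by (split; [lra|]; intros s Hs; replace s with 0 by lra; auto).
  destruct (completeness E) as [T [Hub Hlub]];
    [exists 1; intros x [Hx _]; lra | exists 0; auto|].
  assert (T01 : 0 <= T <= 1) by (split; [apply Hub | apply Hlub; intros x [Hx _]]; auto; lra).
  assert (Hbelow : forall s, 0 <= s < T -> U (g s)).
  { intros s Hs; destruct (classic (exists e, E e /\ s < e)) as [[e [[_ He] Hse]]|Hn].
    - apply He; lra.
    - exfalso; enough (T <= s) by lra; apply Hlub; intros x Ex.
      destruct (Rle_lt_dec x s); auto; exfalso; eauto. }
  destruct (Hpath T T01) as [EtT [UVT nUVT]].
  assert (UT : U (g T)).
  { destruct UVT as [|VT]; auto; exfalso.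
    destruct (openEt_path_near V g T HV Hg EtT VT) as [d [Hd Hnear]].
    destruct (Req_dec T 0) as [->|HT]; [tauto|].
    set (s := Rmax 0 (T - d / 2)).
    assert (Hs : 0 <= s < T /\ Rabs (s - T) < d)
      by (unfold s, Rmax; destruct (Rle_dec 0 (T - d / 2)); split; try apply Rabs_def1; lra).
    destruct (Hpath s ltac:(lra)) as [Ets [_ Hns]].
    apply Hns; split; [apply Hbelow | apply Hnear]; tauto. }
  assert (ET : forall s, 0 <= s <= T -> U (g s))
    by (intros s Hs; destruct (Req_dec s T) as [->|]; auto; apply Hbelow; lra).
  destruct (Req_dec T 1) as [<-|HT1]; [apply ET; lra|exfalso].
  destruct (openEt_path_near U g T HU Hg EtT UT) as [d [Hd Hnear]].
  set (s' := Rmin 1 (T + d / 2)).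
  assert (Hs' : T < s' <= 1) by (unfold s', Rmin; destruct (Rle_dec 1 (T + d / 2)); lra).
  enough (E s') by (assert (s' <= T) by (apply Hub; auto); lra).
  split; [lra|]; intros s Hs; destruct (Rle_lt_dec s T); [apply ET; lra|].
  apply Hnear; [|apply Hpath; lra].
  unfold s', Rmin in Hs; destruct (Rle_dec 1 (T + d / 2)); apply Rabs_def1; lra.
Qed.

Definition separates (S U V : Vec -> Prop) : Prop :=
  openEt p q U /\ openEt p q V /\
  (forall w, Et w -> S w -> U w \/ V w) /\ (forall w, Et w -> S w -> U w -> V w -> False).

Lemma connected_of_linked (S : Vec -> Prop) :
  (forall U V, separates S U V -> forall w w', Et w -> S w -> Et w' -> S w' -> U w -> U w') ->
  connected_in Et (openEt p q) S.
Proof.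
  intros Hlink [U [V [HU [HV [Hcov [Hdis [[w [Ew [Sw Uw]]] [w' [Ew' [Sw' Vw']]]]]]]]]].
  apply (Hdis w' Ew' Sw'); auto; apply (Hlink U V (conj HU (conj HV (conj Hcov Hdis))) w w'); auto.
Qed.

Definition patch_cap (v u w : Vec) : Prop := 0 < B v w /\ 0 < B u w.

Lemma chart_segment_stays v u U V x x' : Et v -> separates (patch_cap v u) U V ->
  chart_dom v x -> chart_dom v x' ->
  (forall t, 0 <= t <= 1 -> 0 < B u (chart v (lerp x x' t))) ->
  U (chart_pt v x) -> U (chart_pt v x').
Proof.
  intros Hv [HU [HV [Hcov Hdis]]] Hx Hx' Hpos Ux.
  assert (Hdom : forall t, chart_dom v (lerp x x' t)) by (intros; apply chart_dom_lerp; auto).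
  rewrite <- (lerp0 x x') in Ux; rewrite <- (lerp1 x x').
  apply (path_stays U V (fun t => chart_pt v (lerp x x' t))); auto.
  - apply vcont_normalize; [apply vcont_chart_lerp | intros; apply ip_chart_pos; auto].
  - intros t Ht.
    assert (Et_t : Et (chart_pt v (lerp x x' t))) by (apply Etilde_chart_pt; auto).
    assert (S_t : patch_cap v u (chart_pt v (lerp x x' t))).
    { split; apply Bform_normalize_pos; auto using ip_chart_pos.
      rewrite Bform_chart_l; auto; lra. }
    split; [|split]; auto; intros [Ut Vt]; eapply Hdis; eauto.
Qed.

Lemma chart_segment_linked v u U V x x' : Et v -> separates (patch_cap v u) U V ->
  chart_dom v x -> chart_dom v x' ->
  (forall t, 0 <= t <= 1 -> 0 < B u (chart v (lerp x x' t))) ->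
  (U (chart_pt v x) <-> U (chart_pt v x')).
Proof.
  intros Hv Hsep Hx Hx' Hpos; split; apply chart_segment_stays with u V; auto.
  intros t Ht; rewrite lerp_sym; apply Hpos; lra.
Qed.

Definition segment_in_cone (K : R) (y y' : Vec) : Prop :=
  forall t, 0 <= t <= 1 -> 0 < K * B (lerp y y' t) (lerp y y' t).

Definition cone_linked (v : Vec) (K : R) (P : Vec -> Prop) : Prop :=
  forall y y', chart_dom v y -> chart_dom v y' -> segment_in_cone K y y' -> (P y <-> P y').

(* Dropping the other side's coordinates only strengthens the sign of K Q. *)
Lemma segment_in_cone_side K s y :
  0 < K * side_sign s -> 0 < K * B y y -> segment_in_cone K y (side s y).
Proof.
  intros Hs Hy t Ht.
  set (z := side s y); set (r := side (negb s) y).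
  assert (Hcross : B z r = 0) by apply Bform_side_cross.
  assert (Hr : K * B r r <= 0).
  { unfold r; rewrite (Bform_side (negb s)) by apply side_idem.
    pose proof (ip_self_ge0 (side (negb s) y)); destruct s; simpl in *; nra. }
  assert (Hrz : B r z = 0) by (rewrite Bform_sym; auto).
  assert (HQy : B y y = B z z + B r r).
  { rewrite <- (side_split s y); fold z r; Bexpand; rewrite Hcross, Hrz; ring. }
  assert (HQt : B (lerp y z t) (lerp y z t) = B z z + (1 - t) * (1 - t) * B r r).
  { replace (lerp y z t) with (vadd z (vscal (1 - t) r))
      by (rewrite <- (side_split s y) at 1; extensionality i; unfold lerp, vadd, vscal, z, r; ring).
    Bexpand; rewrite Hcross, Hrz; ring. }
  rewrite HQt; rewrite HQy in Hy.
  assert (0 <= 1 - (1 - t) * (1 - t)) by nra.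
  assert ((1 - (1 - t) * (1 - t)) * (K * B r r) <= 0) by nra.
  nra.
Qed.

Lemma lerp_orth_ip_pos a b t : 0 < ip a a -> 0 < ip b b -> ip a b = 0 -> 0 <= t <= 1 ->
  0 < ip (lerp a b t) (lerp a b t).
Proof.
  intros Ha Hb Hab Ht; unfold lerp; Iexpand; rewrite (ip_sym b a), Hab.
  match goal with |- 0 < ?e => replace e with ((1 - t) * (1 - t) * ip a a + t * t * ip b b) by ring end.
  destruct (Rle_lt_dec t (1/2)).
  - apply Rplus_lt_le_0_compat; [apply Rmult_lt_0_compat | apply Rmult_le_pos]; nra.
  - apply Rplus_le_lt_0_compat; [apply Rmult_le_pos | apply Rmult_lt_0_compat]; nra.
Qed.

Definition unit_vec (k : nat) : Vec := fun i => if Nat.eqb i k then 1 else 0.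

Lemma ip_unit_vec k a : (k < dim)%nat -> ip (unit_vec k) a = a k.
Proof.
  unfold ip; generalize dim; intros n; induction n as [|n IH]; intros Hk; [lia|]; simpl.
  destruct (Nat.eq_dec k n) as [->|Hne].
  - rewrite rsum_eq0; [unfold unit_vec; rewrite Nat.eqb_refl; ring|].
    intros i Hi; unfold unit_vec; rewrite (proj2 (Nat.eqb_neq i n)) by lia; ring.
  - rewrite IH by lia; unfold unit_vec; rewrite (proj2 (Nat.eqb_neq n k)) by lia; ring.
Qed.

(* Each side has at least three coordinates, so a nonnegative weight of total mass 2
   is below 1 somewhere on it. *)
Lemma side_index_small s f : (forall i, (i < dim)%nat -> 0 <= f i) -> rsum f dim = 2 ->
  exists k, (k < dim)%nat /\ Bool.eqb s (Nat.ltb k (S p)) = true /\ f k < 1.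
Proof.
  intros Hf Hsum.
  set (a := if s then 0%nat else S p).
  assert (Ha : (a + 2 < dim)%nat) by (unfold a; destruct s; lia).
  assert (Hside : forall j, (j <= 2)%nat -> Bool.eqb s (Nat.ltb (a + j) (S p)) = true).
  { intros j Hj; unfold a; destruct s;
      [rewrite (proj2 (Nat.ltb_lt _ _)) | rewrite (proj2 (Nat.ltb_ge _ _))]; auto; lia. }
  pose proof (rsum_three_le f dim a Hf Ha).
  destruct (Rlt_le_dec (f a) 1); [exists (a + 0)%nat|].
  { rewrite Nat.add_0_r; split; [lia|split; auto]; rewrite <- (Nat.add_0_r a) at 1; apply Hside; lia. }
  destruct (Rlt_le_dec (f (S a)) 1); [exists (a + 1)%nat|exists (a + 2)%nat];
    (split; [lia|split; [apply Hside; lia|]]).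
  - rewrite Nat.add_1_r; auto.
  - replace (a + 2)%nat with (S (S a)) by lia; lra.
Qed.

Lemma exists_orth_side s a b : side s a = a -> side s b = b -> supported a -> supported b ->
  0 < ip a a -> 0 < ip b b -> ip a b = 0 ->
  exists z, side s z = z /\ supported z /\ 0 < ip z z /\ ip z a = 0 /\ ip z b = 0.
Proof.
  intros Sa Sb Ha Hb Haa Hbb Hab.
  set (weight := fun k => / ip a a * (a k * a k) + / ip b b * (b k * b k)).
  assert (Hoff : forall i, Bool.eqb s (Nat.ltb i (S p)) = false -> a i = 0 /\ b i = 0)
    by (intros i Hi; rewrite <- Sa, <- Sb; unfold side; rewrite Hi; auto).
  destruct (side_index_small s weight) as [k [Hk [Hks Hwk]]].
  - intros i _; unfold weight.
    assert (0 <= a i * a i) by apply Rle_0_sqr; assert (0 <= b i * b i) by apply Rle_0_sqr.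
    assert (0 < / ip a a) by (apply Rinv_0_lt_compat; auto).
    assert (0 < / ip b b) by (apply Rinv_0_lt_compat; auto); nra.
  - unfold weight; rewrite rsum_lin; fold (ip a a) (ip b b); field; lra.
  - (* Subtracting from e_k its projections onto a and b leaves 1 - weight k > 0 at k. *)
    set (z := vadd (unit_vec k) (vadd (vscal (- (a k / ip a a)) a) (vscal (- (b k / ip b b)) b))).
    exists z; split; [|split; [|split; [|split]]].
    + extensionality i; unfold side; destruct (Bool.eqb s (Nat.ltb i (S p))) eqn:E; auto.
      destruct (Hoff i E) as [Hai Hbi]; unfold z, vadd, vscal, unit_vec; rewrite Hai, Hbi.
      rewrite (proj2 (Nat.eqb_neq i k)) by (intros ->; congruence); ring.
    + intros i Hi; unfold z, vadd, vscal, unit_vec.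
      rewrite (Ha i), (Hb i), (proj2 (Nat.eqb_neq i k)) by (auto; lia); ring.
    + assert (Hzk : z k = 1 - weight k)
        by (unfold z, vadd, vscal, unit_vec, weight; rewrite Nat.eqb_refl; field; lra).
      pose proof (sqr_coord_le_ip z k Hk); nra.
    + unfold z; Iexpand; rewrite ip_unit_vec, (ip_sym b a), Hab by auto; field; lra.
    + unfold z; Iexpand; rewrite ip_unit_vec, Hab by auto; field; lra.
Qed.

Lemma side_segment_through_zero K s z z' : 0 < K * side_sign s ->
  side s z = z -> side s z' = z' -> 0 < ip z z -> ~ segment_in_cone K z z' ->
  exists t0, 0 < t0 <= 1 /\ forall i, (i < dim)%nat -> lerp z z' t0 i = 0.
Proof.
  intros Hs Sz Sz' Iz Hseg; apply NNPP; intros Hn; apply Hseg; intros t Ht.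
  rewrite (Bform_side s) by (rewrite side_lerp; congruence).
  rewrite <- Rmult_assoc; apply Rmult_lt_0_compat; auto.
  destruct (Rlt_le_dec 0 (ip (lerp z z' t) (lerp z z' t))) as [|Hle]; auto; exfalso.
  destruct (Req_dec t 0) as [->|Ht0]; [rewrite lerp0 in Hle; lra|].
  apply Hn; exists t; split; [lra|]; apply ip_self_le0; auto.
Qed.

Lemma cone_linked_side v K s (P : Vec -> Prop) z z' : Et v -> 0 < K * side_sign s ->
  cone_linked v K P -> chart_dom v z -> chart_dom v z' -> side s z = z -> side s z' = z' ->
  0 < K * B z z -> 0 < K * B z' z' -> (P z <-> P z').
Proof.
  intros Hv Hs Hlink Hz Hz' Sz Sz' Kz Kz'.
  assert (Kside : forall w, side s w = w -> K * B w w = (K * side_sign s) * ip w w)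
    by (intros w Hw; rewrite (Bform_side s w Hw); ring).
  assert (Iz : 0 < ip z z) by (rewrite Kside in Kz by auto; nra).
  assert (Iz' : 0 < ip z' z') by (rewrite Kside in Kz' by auto; nra).
  destruct (classic (segment_in_cone K z z')) as [Hseg|Hseg]; [apply Hlink; auto|].
  (* Otherwise the segment passes through 0, so z' is a negative multiple of z and
     we go around the origin through a third vector orthogonal to both. *)
  destruct (side_segment_through_zero K s z z' Hs Sz Sz' Iz Hseg) as [t0 [Ht0 Hzero]].
  assert (Hvz : ip (side s v) z = 0)
    by (rewrite <- ip_side_swap, Sz, <- Bform_cartan; apply (proj2 (proj2 Hz))).
  assert (Ivs : 0 < ip (side s v) (side s v)).
  { rewrite ip_side_swap, side_idem, ip_side_l, (proj1 (proj2 Hv)).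
    change (ip v v) with (enorm2 p q v); rewrite (proj2 (proj2 Hv)); lra. }
  destruct (exists_orth_side s (side s v) z (side_idem s v) Sz (supported_side s v (proj1 Hv))
              (proj1 Hz) Ivs Iz Hvz) as [zeta [Szeta [Hzeta [Izeta [Hzv Hzz]]]]].
  assert (Hzz' : ip zeta z' = 0).
  { assert (H0 : ip zeta (lerp z z' t0) = 0)
      by (apply rsum_eq0; intros i Hi; rewrite Hzero by auto; ring).
    unfold lerp in H0; rewrite ip_addr, !ip_scalr, Hzz in H0; nra. }
  assert (Dzeta : chart_dom v zeta).
  { split; [auto|split].
    - rewrite <- Szeta, Bform_side_r, ip_sym, Hzv; ring.
    - rewrite Bform_cartan, <- Szeta, ip_side_swap, ip_sym, Hzv; auto. }
  assert (Hvia : forall a, chart_dom v a -> side s a = a -> 0 < ip a a -> ip zeta a = 0 ->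
                   P a <-> P zeta).
  { intros a Da Sa Ia Ha; apply Hlink; auto; intros t Ht.
    rewrite Kside by (rewrite side_lerp; congruence).
    apply Rmult_lt_0_compat, lerp_orth_ip_pos; auto; rewrite ip_sym; auto. }
  rewrite (Hvia z), (Hvia z'); auto; reflexivity.
Qed.

Lemma cone_connected v K s (P : Vec -> Prop) y y' : Et v -> 0 < K * side_sign s ->
  cone_linked v K P -> chart_dom v y -> chart_dom v y' ->
  0 < K * B y y -> 0 < K * B y' y' -> (P y <-> P y').
Proof.
  intros Hv Hs Hlink Hy Hy' Ky Ky'.
  assert (Hproj : forall x, chart_dom v x -> 0 < K * B x x ->
            (P x <-> P (side s x)) /\ 0 < K * B (side s x) (side s x)).
  { intros x Hx Kx; split.
    - apply Hlink; auto using chart_dom_side, segment_in_cone_side.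
    - pose proof (segment_in_cone_side K s x Hs Kx 1 ltac:(lra)) as H1; rewrite lerp1 in H1; auto. }
  destruct (Hproj y Hy Ky) as [-> K1]; destruct (Hproj y' Hy' Ky') as [-> K1'].
  apply (cone_linked_side v K s); auto using chart_dom_side, side_idem.
Qed.

Lemma patch_cap_linked_affine v u U V x x' : Et v -> B u v = 0 ->
  separates (patch_cap v u) U V -> chart_dom v x -> chart_dom v x' ->
  0 < B u (chart v x) -> 0 < B u (chart v x') -> (U (chart_pt v x) <-> U (chart_pt v x')).
Proof.
  intros Hv Huv Hsep Hx Hx' Bx Bx'; apply (chart_segment_linked v u U V); auto; intros t Ht.
  assert (Haff : forall y, B u (chart v y) = B u y + B u (cartan v))
    by (intros y; rewrite Bform_chart_r, Huv; ring).
  rewrite Haff in *; unfold lerp; Bexpand.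
  replace ((1 - t) * B u x + t * B u x' + B u (cartan v))
    with ((1 - t) * (B u x + B u (cartan v)) + t * (B u x' + B u (cartan v))) by ring.
  apply convex_pos; auto.
Qed.

(* Up to the factor B(v,u), u is the chart image of some x0, so B(u, chart v .) is the
   quadratic form of the model space centred at x0. *)
Lemma Bform_chart_cone v u : Et v -> Et u -> B v u <> 0 ->
  exists x0, chart_dom v x0 /\
    forall x, chart_dom v x -> B u (chart v x) = - B v u / 2 * B (vsub x x0) (vsub x x0).
Proof.
  intros Hv [Hu1 [Hu2 _]] Hvu.
  destruct (chart_inv_spec v Hv u Hu1 Hu2 Hvu) as [Hx0 Hc].
  exists (chart_inv v u); split; auto; intros x Hx.
  replace u with (vscal (B v u) (chart v (chart_inv v u))) at 1
    by (rewrite Hc; extensionality i; unfold vscal; field; auto).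
  rewrite Bform_scall, Bform_chart_chart by auto; field.
Qed.

Lemma patch_cap_linked_cone v u U V x x' : Et v -> Et u -> B u v <> 0 ->
  separates (patch_cap v u) U V -> chart_dom v x -> chart_dom v x' ->
  0 < B u (chart v x) -> 0 < B u (chart v x') -> (U (chart_pt v x) <-> U (chart_pt v x')).
Proof.
  intros Hv Hu Huv Hsep Hx Hx' Bx Bx'.
  rewrite Bform_sym in Huv.
  destruct (Bform_chart_cone v u Hv Hu Huv) as [x0 [Hx0 Hcone]].
  set (K := - B v u / 2) in Hcone.
  set (P := fun y => U (chart_pt v (vadd x0 y))).
  assert (Hshift : forall y, vadd x0 (vsub y x0) = y)
    by (intros y; extensionality i; unfold vsub, vadd, vscal; ring).
  assert (Hlink : cone_linked v K P).
  { intros y y' Hy Hy' Hseg; apply (chart_segment_linked v u U V); auto using chart_dom_add.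
    intros t Ht; rewrite Hcone by (apply chart_dom_lerp; apply chart_dom_add; auto).
    replace (vsub (lerp (vadd x0 y) (vadd x0 y') t) x0) with (lerp y y' t); [apply Hseg; auto|].
    extensionality i; unfold lerp, vsub, vadd, vscal; ring. }
  assert (Hs : exists s, 0 < K * side_sign s).
  { destruct (Rlt_le_dec 0 K); [exists true | exists false]; simpl; [lra|].
    assert (K <> 0) by (unfold K; lra); lra. }
  destruct Hs as [s Hs].
  pose proof (cone_connected v K s P (vsub x x0) (vsub x' x0) Hv Hs Hlink) as Hconn.
  unfold P in Hconn; rewrite !Hshift in Hconn.
  apply Hconn; auto using chart_dom_sub; rewrite <- Hcone; auto.
Qed.

Lemma connected_patch_cap v u : Et v -> Et u -> connected_in Et (openEt p q) (patch_cap v u).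
Proof.
  intros Hv Hu; apply connected_of_linked; intros U V Hsep w w' Ew [Bvw Buw] Ew' [Bvw' Buw'] Uw.
  destruct (chart_pt_inv v Hv w Ew Bvw) as [Hx [Hw Hcw]].
  destruct (chart_pt_inv v Hv w' Ew' Bvw') as [Hx' [Hw' Hcw']].
  assert (Hpos : forall z, 0 < B v z -> 0 < B u z -> 0 < B u (vscal (/ B v z) z))
    by (intros z H1 H2; rewrite Bform_scalr; apply Rmult_lt_0_compat; auto;
        apply Rinv_0_lt_compat; auto).
  rewrite <- Hw'; rewrite <- Hw in Uw.
  enough (U (chart_pt v (chart_inv v w)) <-> U (chart_pt v (chart_inv v w'))) by tauto.
  destruct (Req_dec (B u v) 0).
  - apply (patch_cap_linked_affine v u U V); auto; [rewrite Hcw | rewrite Hcw']; auto.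
  - apply (patch_cap_linked_cone v u U V); auto; [rewrite Hcw | rewrite Hcw']; auto.
Qed.

Lemma Bform_lipschitz v w w' :
  Rabs (B v w - B v w') <= rsum (fun i => Rabs (v i)) dim * edist p q w w'.
Proof.
  replace (B v w - B v w') with (B v (vsub w w')) by (unfold vsub; Bexpand; ring).
  rewrite Bform_sgn; eapply Rle_trans; [apply Rabs_rsum_le|].
  rewrite Rmult_comm, <- rsum_scal; apply rsum_le; intros i Hi.
  rewrite !Rabs_mult.
  replace (Rabs (sgn i)) with 1
    by (unfold sgn, Rabs; destruct (Nat.ltb i (S p)), (Rcase_abs _); lra).
  replace (vsub w w' i) with (w i - w' i) by (unfold vsub, vadd, vscal; ring).
  pose proof (Rabs_coord_le_edist w w' i Hi); pose proof (Rabs_pos (v i)); nra.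
Qed.

Lemma Bform_sign_stable v w : B v w <> 0 -> exists eps, 0 < eps /\
  forall w', edist p q w w' < eps -> 0 < B v w * B v w'.
Proof.
  intros Hw; set (L := rsum (fun i => Rabs (v i)) dim); set (b := Rabs (B v w)).
  assert (HL : 0 <= L) by (apply rsum_ge0; intros; apply Rabs_pos).
  assert (Hb : 0 < b) by (apply Rabs_pos_lt; auto).
  exists (b / (L + 1)); split; [apply Rdiv_lt_0_compat; lra|]; intros w' Hw'.
  assert (Hd : Rabs (B v w - B v w') < b).
  { eapply Rle_lt_trans; [apply Bform_lipschitz|]; fold L.
    apply Rle_lt_trans with (L * (b / (L + 1))); [apply Rmult_le_compat_l; lra|].
    apply (Rmult_lt_reg_r (L + 1)); [lra|]; field_simplify; lra. }
  unfold b in *; apply Rabs_def2 in Hd.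
  destruct (Rcase_abs (B v w)); [rewrite Rabs_left in * | rewrite Rabs_right in *]; auto; nra.
Qed.

Lemma openEt_ext (U U' : Vec -> Prop) : (forall w, U w <-> U' w) -> openEt p q U -> openEt p q U'.
Proof.
  intros HUU' HU w Ew Uw; apply HUU' in Uw; destruct (HU w Ew Uw) as [e [He Hball]].
  exists e; split; auto; intros; apply HUU'; auto.
Qed.

Lemma openEt_Bform_pos v : openEt p q (fun w => 0 < B v w).
Proof.
  intros w _ Hw; destruct (Bform_sign_stable v w ltac:(lra)) as [e [He Hball]].
  exists e; split; auto; intros w' _ Hd; specialize (Hball w' Hd); nra.
Qed.

Lemma openEt_Bform_neg v : openEt p q (fun w => B v w < 0).
Proof.
  apply (openEt_ext (fun w => 0 < B (vneg v) w)); [|apply openEt_Bform_pos].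
  intros w; rewrite Bform_oppl; lra.
Qed.

Lemma openEt_Bform_prod_pos v1 v2 : openEt p q (fun w => 0 < B v1 w * B v2 w).
Proof.
  intros w _ Hw.
  destruct (Bform_sign_stable v1 w) as [e1 [He1 H1]]; [intros e; rewrite e in Hw; lra|].
  destruct (Bform_sign_stable v2 w) as [e2 [He2 H2]]; [intros e; rewrite e in Hw; lra|].
  exists (Rmin e1 e2); split; [apply Rmin_pos; auto|]; intros w' _ Hd.
  specialize (H1 w' ltac:(pose proof (Rmin_l e1 e2); lra)).
  specialize (H2 w' ltac:(pose proof (Rmin_r e1 e2); lra)).
  assert (0 < (B v1 w * B v2 w) * (B v1 w' * B v2 w'))
    by (replace ((B v1 w * B v2 w) * (B v1 w' * B v2 w'))
          with ((B v1 w * B v1 w') * (B v2 w * B v2 w')) by ring;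
        apply Rmult_lt_0_compat; auto).
  nra.
Qed.

Lemma openEt_Bform_prod_neg v1 v2 : openEt p q (fun w => B v1 w * B v2 w < 0).
Proof.
  apply (openEt_ext (fun w => 0 < B (vneg v1) w * B v2 w)); [|apply openEt_Bform_prod_pos].
  intros w; rewrite Bform_oppl; lra.
Qed.

Lemma Etilde_vneg w : Et w -> Et (vneg w).
Proof.
  intros [H1 [H2 H3]]; split; [|split].
  - intros i Hi; unfold vneg; rewrite H1; auto; ring.
  - rewrite Bform_oppl, Bform_oppr, H2; ring.
  - rewrite <- H3; apply rsum_ext; intros; unfold vneg; ring.
Qed.

Lemma connected_in_ext X Op (A A' : Vec -> Prop) : (forall w, X w -> (A w <-> A' w)) ->
  connected_in X Op A -> connected_in X Op A'.
Proof.
  intros HA Hconn [U [V [HU [HV [Hcov [Hdis [[w [Xw [Aw Uw]]] [w' [Xw' [Aw' Vw']]]]]]]]]].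
  apply Hconn; exists U, V; repeat split; auto.
  - intros x Xx Ax; apply Hcov, HA; auto.
  - intros x Xx Ax; apply Hdis, HA; auto.
  - exists w; rewrite HA; auto.
  - exists w'; rewrite HA; auto.
Qed.

Lemma component_in_ext X Op (C C' Y Y' : Vec -> Prop) :
  (forall w, X w -> (C w <-> C' w)) -> (forall w, X w -> (Y w <-> Y' w)) ->
  component_in X Op C Y -> component_in X Op C' Y'.
Proof.
  intros HC HY [Hsub [[w [Xw Cw]] [Hconn Hmax]]]; split; [|split; [|split]].
  - intros x Xx Cx; apply HY, Hsub, HC; auto.
  - exists w; rewrite <- HC; auto.
  - apply (connected_in_ext X Op C); auto.
  - intros D HD HCD HDY x Xx Dx; apply HC, (Hmax D); auto.
    + intros y Xy Cy; apply HCD, HC; auto.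
    + intros y Xy Dy; apply HY, HDY; auto.
Qed.

Lemma connected_pos_patch v : Et v -> connected_in Et (openEt p q) (fun w => 0 < B v w).
Proof.
  intros Hv; apply (connected_in_ext Et _ (patch_cap v v)); [|apply connected_patch_cap; auto].
  unfold patch_cap; tauto.
Qed.

Lemma MinkPatchT_pos M : MinkPatchT p q M ->
  exists v, Et v /\ forall w, Et w -> (M w <-> 0 < B v w).
Proof.
  intros [_ [v0 [Hv0 [Hsub [[w0 [Ew0 Mw0]] [Hconn Hmax]]]]]].
  assert (Hw0 : B v0 w0 <> 0) by exact (proj2 (Hsub w0 Ew0 Mw0)).
  assert (Hv : exists v, Et v /\ 0 < B v w0 /\ forall w, B v0 w <> 0 <-> B v w <> 0).
  { destruct (Rlt_le_dec 0 (B v0 w0)); [exists v0; split; [|split]; auto; tauto|].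
    exists (vneg v0); rewrite Bform_oppl; split; [apply Etilde_vneg; auto|split; [lra|]].
    intros w; rewrite Bform_oppl; split; intros h e; apply h; lra. }
  destruct Hv as [v [Hv [Hvw0 Hvv0]]]; exists v; split; auto.
  assert (HM : forall w, Et w -> M w -> 0 < B v w).
  { intros w1 Ew1 Mw1; apply NNPP; intros Hn; apply Hconn.
    exists (fun w => 0 < B v w), (fun w => B v w < 0).
    split; [apply openEt_Bform_pos|split; [apply openEt_Bform_neg|]].
    split; [|split; [intros; lra|split; [exists w0; auto|exists w1]]].
    - intros w Ew Mw; destruct (Hsub w Ew Mw) as [_ Hne]; apply Hvv0 in Hne; lra.
    - destruct (Hsub w1 Ew1 Mw1) as [_ Hne]; apply Hvv0 in Hne; split; [|split]; auto; lra. }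
  intros w Ew; split; [apply HM; auto|intros Hw].
  apply (Hmax (fun w => 0 < B v w)); auto.
  - apply connected_pos_patch; auto.
  - intros x Ex Bx; split; auto; apply Hvv0; lra.
Qed.

Lemma piX_ext (A A' : Vec -> Prop) : (forall w, Et w -> (A w <-> A' w)) ->
  forall w, piX p q A w <-> piX p q A' w.
Proof.
  intros HA w; unfold piX; split; intros [Ew HAw]; split; auto;
    (destruct HAw; [left | right]; apply HA; auto using Etilde_vneg).
Qed.

Lemma piX_pos_iff v w : Et w -> (piX p q (fun w => 0 < B v w) w <-> B v w <> 0).
Proof.
  intros Ew; unfold piX; rewrite Bform_oppr; split; [intros [_ [H|H]]; lra|].
  intros H; split; auto; destruct (Rlt_le_dec 0 (B v w)); [left|right]; lra.
Qed.

Lemma piX_patch_cap_iff v1 v2 w : Et w -> (piX p q (patch_cap v1 v2) w <-> 0 < B v1 w * B v2 w).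
Proof.
  intros Ew; unfold piX, patch_cap; rewrite !Bform_oppr; split.
  - intros [_ [[H1 H2]|[H1 H2]]]; [|replace (B v1 w * B v2 w) with (- B v1 w * - B v2 w) by ring];
      apply Rmult_lt_0_compat; auto.
  - intros H; split; auto.
    assert (B v1 w <> 0) by (intros e; rewrite e in H; lra).
    destruct (Rlt_le_dec 0 (B v1 w)); [left|right]; split;
      [auto | nra | lra | assert (B v1 w < 0) by lra; nra].
Qed.

(* The open sets of Ein are the symmetric open sets of Ein~, so a separation of pi_X(A)
   is already one of A. *)
Lemma connected_piX (A : Vec -> Prop) :
  connected_in Et (openEt p q) A -> connected_in Et (openEin p q) (piX p q A).
Proof.
  intros Hconn [U [V [[SU HU] [[SV HV] [Hcov [Hdis [[a [Ea [[_ Aa] Ua]]] [b [Eb [[_ Ab] Vb]]]]]]]]]].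
  assert (HAX : forall w, Et w -> A w -> piX p q A w) by (intros w Ew Aw; split; auto).
  assert (HUa : exists w, Et w /\ A w /\ U w).
  { destruct Aa; [exists a | exists (vneg a)]; split; auto using Etilde_vneg. }
  assert (HVb : exists w, Et w /\ A w /\ V w).
  { destruct Ab; [exists b | exists (vneg b)]; split; auto using Etilde_vneg. }
  apply Hconn; exists U, V; split; [exact HU|split; [exact HV|]].
  split; [intros w Ew Aw; apply Hcov; auto|].
  split; [intros w Ew Aw; apply Hdis; auto|split; auto].
Qed.

Lemma Bform_prod_vneg v1 v2 w : B v1 (vneg w) * B v2 (vneg w) = B v1 w * B v2 w.
Proof. rewrite !Bform_oppr; ring. Qed.

(* The symmetric open sets {B(v1,.) B(v2,.) > 0} and {B(v1,.) B(v2,.) < 0} of Ein~ split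
   pi_X(M1) /\ pi_X(M2), and the first one is pi_X(M1 /\ M2). *)
Lemma component_piX_patch_cap v1 v2 : Et v1 -> Et v2 -> (exists w, Et w /\ patch_cap v1 v2 w) ->
  component_in Et (openEin p q) (piX p q (patch_cap v1 v2))
    (fun w => B v1 w <> 0 /\ B v2 w <> 0).
Proof.
  intros Hv1 Hv2 [w0 [Ew0 Hw0]].
  assert (Hprod : forall w, Et w -> (piX p q (patch_cap v1 v2) w <-> 0 < B v1 w * B v2 w))
    by (intros; apply piX_patch_cap_iff; auto).
  assert (Hnz : forall w, B v1 w <> 0 -> B v2 w <> 0 -> B v1 w * B v2 w <> 0)
    by (intros; apply Rmult_integral_contrapositive_currified; auto).
  split; [|split; [|split]].
  - intros w Ew Hw; apply Hprod in Hw; auto; split; intros e; rewrite e in Hw; lra.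
  - exists w0; split; [|split]; auto.
  - apply connected_piX, connected_patch_cap; auto.
  - intros D HD HCD HDY w Ew Dw; apply Hprod; auto.
    destruct (HDY w Ew Dw) as [n1 n2].
    apply NNPP; intros Hneg; apply HD.
    exists (fun x => 0 < B v1 x * B v2 x), (fun x => B v1 x * B v2 x < 0).
    split; [split; [intros x; rewrite Bform_prod_vneg; auto | apply openEt_Bform_prod_pos]|].
    split; [split; [intros x; rewrite Bform_prod_vneg; auto | apply openEt_Bform_prod_neg]|].
    split; [|split; [intros; lra|split]].
    + intros x Ex Dx; destruct (HDY x Ex Dx) as [m1 m2]; pose proof (Hnz x m1 m2); lra.
    + exists w0; split; [|split]; auto.
      * apply HCD; auto; split; auto.
      * apply Hprod; auto; split; auto.
    + exists w; split; [|split]; auto; pose proof (Hnz w n1 n2); lra.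
Qed.

End Form.

Theorem mainTheorem5 (p q : nat) (hp : (2 <= p)%nat) (hq : (2 <= q)%nat)
  (M1 M2 : Vec -> Prop)
  (h1 : MinkPatchT p q M1) (h2 : MinkPatchT p q M2)
  (hne : exists w, M1 w /\ M2 w) :
  component_in (Etilde p q) (openEin p q)
    (piX p q (fun w => M1 w /\ M2 w))
    (fun w => piX p q M1 w /\ piX p q M2 w).
Proof.
  destruct (MinkPatchT_pos p q hp hq M1 h1) as [v1 [Hv1 HM1]].
  destruct (MinkPatchT_pos p q hp hq M2 h2) as [v2 [Hv2 HM2]].
  assert (Hcap : forall w, Etilde p q w -> (M1 w /\ M2 w <-> patch_cap p q v1 v2 w))
    by (intros w Ew; unfold patch_cap; rewrite <- HM1, <- HM2 by auto; tauto).
  apply (component_in_ext _ _ (piX p q (patch_cap p q v1 v2)) _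
           (fun w => Bform p q v1 w <> 0 /\ Bform p q v2 w <> 0)).
  - intros w _; symmetry; apply piX_ext; auto.
  - intros w Ew; rewrite (piX_ext p q M1 _ HM1), (piX_ext p q M2 _ HM2), !piX_pos_iff; tauto.
  - apply component_piX_patch_cap; auto.
    destruct hne as [w [Hw1 Hw2]].
    assert (Ew : Etilde p q w) by (apply (proj1 h1); auto).
    exists w; split; auto; apply Hcap; auto.
Qed.
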